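(* Let $\mathbf F$ be an oriented edge-incidence matrix for an unweighted connected undirected graph $G=(V,\mathcal E)$ without self-loops. Then $\|\mathbf F^\dagger\|_{\max}\le1$.
   Context: For an unweighted graph the adjacency matrix $\boldsymbol\Phi$ has entries in $\{0,1\}$. An oriented edge-incidence matrix $\mathbf F\in\mathbb R^{n\times|\mathcal E|}$ has, for each edge between nodes $j$ and $k$, a column with entry $\sqrt{\Phi_{jk}}=1$ in row $j$, $-1$ in row $k$, and zeros elsewhere. $\mathbf F^\dagger$ is the Moore–Penrose pseudoinverse and $\|\cdot\|_{\max}$ the maximum absolute entry. *)

From mathcomp Require Import all_boot all_order all_algebra.
Set Implicit Arguments. Unset Strict Implicit. Unset Printing Implicit Defensive.
Import Order.TTheory GRing.Theory Num.Theory.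
Local Open Scope ring_scope.

Definition simple_graph (n : nat) (e : rel 'I_n) : Prop :=
  symmetric e /\ irreflexive e.

Definition connected_graph (n : nat) (e : rel 'I_n) : Prop :=
  forall x y : 'I_n, connect e x y.

(* Column c of F is the oriented incidence vector of edge (j,k):
   entry sqrt(Phi_jk) = 1 in row j, -1 in row k, 0 elsewhere. *)
Definition col_edge (R : numDomainType) (n m : nat) (F : 'M[R]_(n, m))
  (c : 'I_m) (j k : 'I_n) : Prop :=
  F j c = 1 /\ F k c = -1 /\ (forall i, i != j -> i != k -> F i c = 0).

(* F is an oriented edge-incidence matrix of the (unweighted) graph e:
   every column is the oriented incidence vector of some edge, and every
   (undirected) edge {j,k} corresponds to exactly one column, with an
   arbitrary orientation. Hence m = |E|. *)
Definition oriented_incidence (R : numDomainType) (n m : nat) (e : rel 'I_n)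
  (F : 'M[R]_(n, m)) : Prop :=
  (forall c : 'I_m, exists j k : 'I_n, e j k /\ col_edge F c j k) /\
  (forall j k : 'I_n, e j k ->
     exists! c : 'I_m, col_edge F c j k \/ col_edge F c k j).

(* X is the Moore--Penrose pseudoinverse of A (the four Penrose conditions;
   for real matrices it exists and is unique). *)
Definition is_MP_pinv (R : numDomainType) (n m : nat)
  (A : 'M[R]_(n, m)) (X : 'M[R]_(m, n)) : Prop :=
  [/\ A *m X *m A = A, X *m A *m X = X,
      (A *m X)^T = A *m X & (X *m A)^T = X *m A].

Definition mx_maxnorm (R : numDomainType) (p q : nat) (A : 'M[R]_(p, q)) : R :=
  \big[Num.max/0]_(i < p) \big[Num.max/0]_(j < q) `|A i j|.

(* Fix a vertex i and let x be column i of F^+.  Connectivity makes the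
   kernel of F^T the constant vectors, so F F^+ is the centering matrix
   I - J/n and F x = e_i - 1/n.  Moreover x = F^T v for some v, i.e.
   x_c = v_a - v_b on the edge c = (a,b).  For a level set
   S = {u | t <= v_u}, the sum of (F x)_u over S equals the sum over all edges
   of x_c (1_S(a) - 1_S(b)), whose terms are all nonnegative; with
   t = max(v_a, v_b) the term of c is |x_c|.  Hence
   |x_c| <= sum over S of (e_i - 1/n) <= 1. *)

From mathcomp Require Import all_boot all_order all_algebra.
From mathcomp Require Import lra.
Set Implicit Arguments. Unset Strict Implicit. Unset Printing Implicit Defensive.
Import Order.TTheory GRing.Theory Num.Theory.
Local Open Scope ring_scope.

Section IncidenceColumn.

Variables (R : numDomainType) (n m : nat) (F : 'M[R]_(n, m)).

Lemma col_edge_neq c j k : col_edge F c j k -> j != k.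
Proof.
move=> [Fj [Fk _]]; apply/eqP => jk; move: Fk; rewrite -jk Fj => /eqP.
by rewrite -subr_eq0 opprK -mulr2n pnatr_eq0.
Qed.

Lemma col_edge_sum c j k (g : 'I_n -> R) :
  col_edge F c j k -> \sum_u F u c * g u = g j - g k.
Proof.
move=> Fc; have [Fj [Fk F0]] := Fc; have jk := col_edge_neq Fc.
rewrite (bigD1 j) //= (bigD1 k) 1?eq_sym //= big1 => [|u /andP[uk uj]].
  by rewrite Fj Fk mul1r mulN1r addr0.
by rewrite F0 ?mul0r.
Qed.

Lemma col_edge_trmx_mulE p (W : 'M[R]_(n, p)) c j k i :
  col_edge F c j k -> (F^T *m W) c i = W j i - W k i.
Proof.
by move=> Fc; rewrite mxE -(col_edge_sum (W ^~ i) Fc); under eq_bigr do rewrite mxE.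
Qed.

Lemma col_edge_sum_set c j k (S : {set 'I_n}) :
  col_edge F c j k -> \sum_(u in S) F u c = (j \in S)%:R - (k \in S)%:R.
Proof.
move=> Fc; rewrite -(col_edge_sum (fun u => (u \in S)%:R) Fc) big_mkcond /=.
by apply: eq_bigr => u _; case: (u \in S); rewrite ?mulr1 ?mulr0.
Qed.

Hypothesis F_col_edge : forall c, exists j k, col_edge F c j k.

Lemma sum_col_incidence_mul p (X : 'M[R]_(m, p)) i : \sum_u (F *m X) u i = 0.
Proof.
under eq_bigr do rewrite mxE; rewrite exchange_big big1 //= => c _.
have [j [k Fc]] := F_col_edge c.
have Fc0 : \sum_u F u c = 0.
  rewrite -[RHS](subrr 1) -(col_edge_sum (fun=> 1) Fc).
  by apply: eq_bigr => u _; rewrite mulr1.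
by rewrite -big_distrl /= Fc0 mul0r.
Qed.

End IncidenceColumn.

Lemma oriented_incidence_col_edge (R : numDomainType) n m (e : rel 'I_n)
  (F : 'M[R]_(n, m)) :
  oriented_incidence e F -> forall c, exists j k, col_edge F c j k.
Proof. by move=> [F_col _] c; have [j [k [_ Fc]]] := F_col c; exists j, k. Qed.

Section Connected.

Variables (R : numDomainType) (n m : nat) (e : rel 'I_n) (F : 'M[R]_(n, m)).
Hypotheses (e_conn : connected_graph e) (F_inc : oriented_incidence e F).

Lemma incidence_ker_trmx_const p (W : 'M[R]_(n, p)) :
  F^T *m W = 0 -> forall a b i, W a i = W b i.
Proof.
move=> FW0 a b i.
have W_closed : closed e [pred u | W u i == W a i].
  move=> x y /(proj2 F_inc) [c [Fc _]]; rewrite !inE.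
  suff -> : W x i = W y i by [].
  apply/eqP; rewrite -subr_eq0; case: Fc => Fc.
  - by rewrite -(col_edge_trmx_mulE W i Fc) FW0 mxE.
  - by rewrite -oppr_eq0 opprB -(col_edge_trmx_mulE W i Fc) FW0 mxE.
by have := closed_connect W_closed (e_conn a b); rewrite !inE eqxx => /esym/eqP.
Qed.

End Connected.

Section PseudoInverse.

Variables (R : numDomainType) (n m : nat) (A : 'M[R]_(n, m)) (X : 'M[R]_(m, n)).
Hypothesis AX : is_MP_pinv A X.

Lemma pinv_proj_trmx : A^T *m (A *m X) = A^T.
Proof. by case: AX => AXA _ AXsym _; rewrite -AXsym -trmx_mul AXA. Qed.

Lemma pinv_trmx_factor : X = A^T *m (X^T *m X).
Proof. by case: AX => _ XAX _ XAsym; rewrite -{1}XAX -XAsym trmx_mul mulmxA. Qed.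

End PseudoInverse.

Definition centering_mx (R : numFieldType) (n : nat) : 'M[R]_n :=
  1%:M - n%:R^-1 *: const_mx 1.

Lemma sum_centering_mx_le1 (R : numFieldType) n (S : {set 'I_n}) i :
  \sum_(u in S) centering_mx R n u i <= 1.
Proof.
have delta_le1 : \sum_(u in S) (u == i)%:R <= 1 :> R.
  case: (boolP (i \in S)) => iS.
    by rewrite (bigD1 i) //= eqxx big1 ?addr0 // => u /andP[_ /negPf->].
  by rewrite big1 ?ler01 // => u uS; case: eqP uS => // ->; rewrite (negPf iS).
under eq_bigr do rewrite !mxE mulr1.
rewrite big_split /= sumrN sumr_const lerBlDr (le_trans delta_le1) // lerDl.
by rewrite mulrn_wge0 // invr_ge0 ler0n.
Qed.

Section IncidencePseudoInverse.

Variables (R : numFieldType) (n m : nat) (e : rel 'I_n) (F : 'M[R]_(n, m)).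
Hypotheses (e_conn : connected_graph e) (F_inc : oriented_incidence e F).

Lemma incidence_pinv_proj Fp : is_MP_pinv F Fp -> F *m Fp = centering_mx R n.
Proof.
move=> FFp; set P := F *m Fp.
have ker : F^T *m (P - 1%:M) = 0 by rewrite mulmxBr pinv_proj_trmx // mulmx1 subrr.
apply/matrixP => a i.
pose kappa := P i i - 1.
have P_col u : P u i = kappa + (u == i)%:R.
  have := incidence_ker_trmx_const e_conn F_inc ker u i i.
  by rewrite /kappa !mxE eqxx => <-; rewrite subrK.
have n_neq0 : n%:R != 0 :> R by rewrite pnatr_eq0 -lt0n (leq_ltn_trans _ (ltn_ord i)).
have kappaE : kappa = - n%:R^-1.
  have := sum_col_incidence_mul (oriented_incidence_col_edge F_inc) Fp i.
  under eq_bigr do rewrite -/P P_col.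
  rewrite big_split /= sumr_const card_ord (bigD1 i) //= eqxx big1 => [|u /negPf -> //].
  rewrite addr0 -[kappa *+ n]mulr_natr => /eqP; rewrite addr_eq0 => /eqP.
  by move/(congr1 (fun x => x / n%:R)); rewrite mulfK // mulN1r.
by rewrite P_col kappaE !mxE mulr1 addrC.
Qed.

End IncidencePseudoInverse.

Lemma mul_threshold_diff_ge0 (R : realDomainType) (x y t : R) :
  0 <= ((t <= x)%R%:R - (t <= y)%R%:R) * (x - y).
Proof.
by case: (lerP t x) => tx; case: (lerP t y) => ty /=;
  rewrite ?subrr ?mul0r ?subr0 ?mul1r ?sub0r ?mulN1r; lra.
Qed.

Lemma mul_threshold_diff_max (R : realDomainType) (x y : R) :
  ((Num.max x y <= x)%R%:R - (Num.max x y <= y)%R%:R) * (x - y) = `|x - y|.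
Proof.
case: (ltgtP x y) => [xy | yx | ->]; last by rewrite !subrr mul0r normr0.
- by rewrite lexx leNgt xy /= sub0r mulN1r ltr0_norm ?subr_lt0.
- by rewrite lexx leNgt yx /= subr0 mul1r gtr0_norm ?subr_gt0.
Qed.

Section Coarea.

Variables (R : realDomainType) (n m : nat) (F : 'M[R]_(n, m)).
Hypothesis F_col_edge : forall c, exists j k, col_edge F c j k.

Lemma incidence_coarea p (V : 'M[R]_(n, p)) c i :
  exists S : {set 'I_n}, `|(F^T *m V) c i| <= \sum_(u in S) (F *m (F^T *m V)) u i.
Proof.
set x := F^T *m V; pose level t := [set u | t <= V u i].
have x_edge c' j k : col_edge F c' j k -> x c' i = V j i - V k i.
  exact: col_edge_trmx_mulE.
have level_term_ge0 t c' : 0 <= (\sum_(u in level t) F u c') * x c' i.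
  have [j [k Fc']] := F_col_edge c'.
  by rewrite (col_edge_sum_set _ Fc') (x_edge _ _ _ Fc') !inE mul_threshold_diff_ge0.
have [a [b Fc]] := F_col_edge c.
exists (level (Num.max (V a i) (V b i))).
under eq_bigr do rewrite mxE; rewrite exchange_big /=.
under eq_bigr do rewrite -big_distrl /=.
rewrite (bigD1 c) //= -[leLHS]addr0 lerD ?sumr_ge0 //.
by rewrite (col_edge_sum_set _ Fc) (x_edge _ _ _ Fc) !inE mul_threshold_diff_max.
Qed.

End Coarea.

Lemma mx_maxnorm_le (R : numDomainType) p q (A : 'M[R]_(p, q)) (b : R) :
  0 <= b -> (forall i j, `|A i j| <= b) -> mx_maxnorm A <= b.
Proof. by move=> b_ge0 Ab; do 2![apply: bigmax_le => // ? _]. Qed.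

Theorem lemmaA4 (R : realFieldType) (n m : nat) (e : rel 'I_n)
  (F : 'M[R]_(n, m)) (Fp : 'M[R]_(m, n)) :
  simple_graph e -> connected_graph e -> oriented_incidence e F ->
  is_MP_pinv F Fp ->
  mx_maxnorm Fp <= 1.
Proof.
move=> _ e_conn F_inc FFp.
apply: mx_maxnorm_le => // c i.
have [S FpS] := incidence_coarea (oriented_incidence_col_edge F_inc) (Fp^T *m Fp) c i.
rewrite -(pinv_trmx_factor FFp) (incidence_pinv_proj e_conn F_inc FFp) in FpS.
by apply: le_trans FpS _; apply: sum_centering_mx_le1.
Qed.
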